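(* For every $r\in[0,1]$, the density of $1$'s in $b(r)$ exists and equals $r$, i.e. $\lim_{n\to\infty}|\{m<n:b(r)(m)=1\}|/n=r$.
   Context: For $X,Y\in2^\omega$, $(X\oplus Y)(2n)=X(n)$, $(X\oplus Y)(2n+1)=Y(n)$. The map $b:[0,1]\to2^\omega$ is defined recursively by $b(0)=0^\omega$, $b(1)=1^\omega$, $b(r)=0^\omega\oplus b(2r)$ for $0<r\le1/2$, and $b(r)=b(2r-1)\oplus1^\omega$ for $1/2\le r<1$. *)

From Stdlib Require Import Reals Lra Lia Arith List ClassicalDescription.
From Coquelicot Require Import Coquelicot.
Open Scope R_scope.

(* Cantor space 2^omega as nat -> bool.
   X (+) Y : (X (+) Y)(2n) = X n, (X (+) Y)(2n+1) = Y n. *)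
Definition join (X Y : nat -> bool) : nat -> bool :=
  fun k => if Nat.even k then X (Nat.div2 k) else Y (Nat.div2 k).

(* Fuel-bounded unfolding of the recursive definition of b:
     b(0) = 0^omega, b(1) = 1^omega,
     b(r) = 0^omega (+) b(2r)        for 0 < r <= 1/2,
     b(r) = b(2r-1) (+) 1^omega      for 1/2 <= r < 1
   (the two clauses agree at r = 1/2).  [b_fuel k r n] returns
   [Some (b(r)(n))] if the value is reached within k unfolding steps. *)
Fixpoint b_fuel (k : nat) (r : R) (n : nat) : option bool :=
  match k with
  | O => None
  | S k' =>
    if Req_EM_T r 0 then Some false
    else if Req_EM_T r 1 then Some true
    else if Rle_dec r (1/2) then
      (if Nat.even n then Some false else b_fuel k' (2 * r) (Nat.div2 n))
    else
      (if Nat.even n then b_fuel k' (2 * r - 1) (Nat.div2 n) else Some true)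
  end.

Definition b (r : R) (n : nat) : bool :=
  if excluded_middle_informative (exists k, b_fuel k r n = Some true)
  then true else false.

Definition ones_below (X : nat -> bool) (n : nat) : nat :=
  length (filter X (seq 0 n)).

From Stdlib Require Import Reals List.
From Coquelicot Require Import Coquelicot.
From Stdlib Require Import Lra Lia Psatz Arith Bool ClassicalDescription.
Open Scope R_scope.

(* Write D(r,n) = |{m < n : b(r)(m) = 1}| - r n for the
   discrepancy of b(r).  The recursive definition makes b(r) an interleaving
   [join X Y] of b(r') with a constant sequence, where r' = 2r or 2r - 1, and
   counting ones in an interleaving halves the length.  This gives the
   self-similarity  D(r,n) = D(r',m) + d  with 2m <= n + 1 and |d| <= 1/2.
   Iterating it, a strong induction on n shows |D(r,n)| <= 4 sqrt n for all
   r in [0,1], and dividing by n the density converges to r. *)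

Lemma b_true_iff (r : R) (n : nat) :
  b r n = true <-> exists k, b_fuel k r n = Some true.
Proof.
  unfold b; destruct excluded_middle_informative; split; intros; auto; discriminate.
Qed.

Lemma b_zero (n : nat) : b 0 n = false.
Proof.
  destruct (b 0 n) eqn:E; [|reflexivity].
  apply b_true_iff in E as [[|k] Hk]; simpl in Hk; [discriminate|].
  destruct Req_EM_T; [discriminate | lra].
Qed.

Lemma b_one (n : nat) : b 1 n = true.
Proof.
  apply b_true_iff. exists 1%nat. simpl.
  destruct Req_EM_T; [lra|]. destruct Req_EM_T; [reflexivity | lra].
Qed.

Lemma b_fuel_lower (k : nat) (r : R) (n : nat) : 0 < r <= 1/2 ->
  b_fuel (S k) r n = if Nat.even n then Some false else b_fuel k (2 * r) (Nat.div2 n).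
Proof.
  intros Hr. simpl.
  destruct Req_EM_T; [lra|]. destruct Req_EM_T; [lra|]. destruct Rle_dec; [reflexivity | lra].
Qed.

Lemma b_fuel_upper (k : nat) (r : R) (n : nat) : 1/2 < r < 1 ->
  b_fuel (S k) r n = if Nat.even n then b_fuel k (2 * r - 1) (Nat.div2 n) else Some true.
Proof.
  intros Hr. simpl.
  destruct Req_EM_T; [lra|]. destruct Req_EM_T; [lra|]. destruct Rle_dec; [lra | reflexivity].
Qed.

Lemma b_lower_half (r : R) (n : nat) : 0 < r <= 1/2 ->
  b r n = join (fun _ => false) (b (2 * r)) n.
Proof.
  intros Hr. unfold join. apply eq_iff_eq_true. rewrite b_true_iff.
  destruct (Nat.even n) eqn:En.
  - split; [|discriminate]. intros [[|k] Hk]; [discriminate|].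
    rewrite b_fuel_lower, En in Hk by exact Hr. discriminate.
  - rewrite b_true_iff. split.
    + intros [[|k] Hk]; [discriminate|].
      rewrite b_fuel_lower, En in Hk by exact Hr. eauto.
    + intros [k Hk]. exists (S k). rewrite b_fuel_lower, En by exact Hr. exact Hk.
Qed.

Lemma b_upper_half (r : R) (n : nat) : 1/2 < r < 1 ->
  b r n = join (b (2 * r - 1)) (fun _ => true) n.
Proof.
  intros Hr. unfold join. apply eq_iff_eq_true. rewrite b_true_iff.
  destruct (Nat.even n) eqn:En.
  - rewrite b_true_iff. split.
    + intros [[|k] Hk]; [discriminate|].
      rewrite b_fuel_upper, En in Hk by exact Hr. eauto.
    + intros [k Hk]. exists (S k). rewrite b_fuel_upper, En by exact Hr. exact Hk.
  - split; [reflexivity|]. intros _. exists 1%nat.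
    rewrite b_fuel_upper, En by exact Hr. reflexivity.
Qed.

Lemma ones_below_S (X : nat -> bool) (n : nat) :
  ones_below X (S n) = (ones_below X n + if X n then 1 else 0)%nat.
Proof.
  unfold ones_below. rewrite seq_S, filter_app, length_app. simpl.
  destruct (X n); reflexivity.
Qed.

Lemma ones_below_le (X : nat -> bool) (n : nat) : (ones_below X n <= n)%nat.
Proof. induction n; [reflexivity|]. rewrite ones_below_S. destruct (X n); lia. Qed.

Lemma ones_below_false (n : nat) : ones_below (fun _ => false) n = 0%nat.
Proof. induction n; [reflexivity|]. rewrite ones_below_S, IHn. reflexivity. Qed.

Lemma ones_below_true (n : nat) : ones_below (fun _ => true) n = n.
Proof. induction n; [reflexivity|]. rewrite ones_below_S, IHn. lia. Qed.

Lemma ones_below_join (X Y : nat -> bool) (k : nat) :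
  ones_below (join X Y) (2 * k) = (ones_below X k + ones_below Y k)%nat /\
  ones_below (join X Y) (2 * k + 1) = (ones_below X (S k) + ones_below Y k)%nat.
Proof.
  assert (Heven : forall j, join X Y (2 * j) = X j).
  { intros j. unfold join. rewrite Nat.even_even, Nat.div2_double. reflexivity. }
  assert (Hodd : forall j, join X Y (2 * j + 1) = Y j).
  { intros j. unfold join. rewrite Nat.even_odd, Nat.div2_odd'. reflexivity. }
  induction k as [|k [_ IH]].
  - split; [reflexivity|]. change (ones_below (join X Y) 1 = ones_below X 1 + 0)%nat.
    rewrite !ones_below_S, Nat.add_0_r. reflexivity.
  - replace (2 * S k)%nat with (S (2 * k + 1)) by lia.
    replace (S (2 * k + 1) + 1)%nat with (S (S (2 * k + 1))) by lia.
    rewrite !ones_below_S, IH, Hodd.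
    replace (S (2 * k + 1)) with (2 * S k)%nat by lia.
    rewrite Heven, (ones_below_S X k). split; lia.
Qed.

Lemma ones_below_ext (X Y : nat -> bool) (n : nat) :
  (forall m, X m = Y m) -> ones_below X n = ones_below Y n.
Proof. intros HXY. unfold ones_below. rewrite (filter_ext _ _ HXY). reflexivity. Qed.

Lemma ones_below_b_lower (r : R) (k : nat) : 0 < r <= 1/2 ->
  ones_below (b r) (2 * k) = ones_below (b (2 * r)) k /\
  ones_below (b r) (2 * k + 1) = ones_below (b (2 * r)) k.
Proof.
  intros Hr. rewrite !(ones_below_ext (b r) _ _ (fun m => b_lower_half r m Hr)).
  destruct (ones_below_join (fun _ => false) (b (2 * r)) k) as [-> ->].
  rewrite !ones_below_false. split; reflexivity.
Qed.

Lemma ones_below_b_upper (r : R) (k : nat) : 1/2 < r < 1 ->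
  ones_below (b r) (2 * k) = (ones_below (b (2 * r - 1)) k + k)%nat /\
  ones_below (b r) (2 * k + 1) = (ones_below (b (2 * r - 1)) (S k) + k)%nat.
Proof.
  intros Hr. rewrite !(ones_below_ext (b r) _ _ (fun m => b_upper_half r m Hr)).
  destruct (ones_below_join (b (2 * r - 1)) (fun _ => true) k) as [-> ->].
  rewrite !ones_below_true. split; reflexivity.
Qed.

Definition discrepancy (r : R) (n : nat) : R := INR (ones_below (b r) n) - r * INR n.

Lemma discrepancy_zero (n : nat) : discrepancy 0 n = 0.
Proof.
  unfold discrepancy. rewrite (ones_below_ext _ _ _ b_zero), ones_below_false. simpl. ring.
Qed.

Lemma discrepancy_one (n : nat) : discrepancy 1 n = 0.
Proof.
  unfold discrepancy. rewrite (ones_below_ext _ _ _ b_one), ones_below_true. ring.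
Qed.

(* The trivial bound: both the count and r n lie in [0, n]. *)
Lemma discrepancy_le_length (r : R) (n : nat) : 0 <= r <= 1 ->
  Rabs (discrepancy r n) <= INR n.
Proof.
  intros Hr. unfold discrepancy.
  pose proof (le_INR _ _ (ones_below_le (b r) n)). pose proof (pos_INR (ones_below (b r) n)).
  pose proof (pos_INR n). apply Rabs_le. nra.
Qed.

Lemma discrepancy_halving (r : R) (n : nat) : 0 <= r <= 1 ->
  exists r' m, 0 <= r' <= 1 /\ (2 * m <= n + 1)%nat /\
               Rabs (discrepancy r n - discrepancy r' m) <= 1/2.
Proof.
  intros Hr.
  (* At the endpoints the discrepancy vanishes identically. *)
  assert (Hconst : forall c, c = 0 \/ c = 1 -> exists r' m, 0 <= r' <= 1 /\
            (2 * m <= n + 1)%nat /\ Rabs (discrepancy c n - discrepancy r' m) <= 1/2).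
  { intros c Hc. exists 0, 0%nat. split; [lra|]. split; [lia|].
    destruct Hc as [-> | ->];
      rewrite ?discrepancy_zero, ?discrepancy_one, Rminus_0_r, Rabs_R0; lra. }
  destruct (Req_EM_T r 0) as [-> | H0]; [apply Hconst; auto|].
  destruct (Req_EM_T r 1) as [-> | H1]; [apply Hconst; auto|].
  unfold discrepancy.
  destruct (Rle_dec r (1/2)) as [Hlo | Hhi];
    destruct (Nat.Even_or_Odd n) as [[k ->] | [k ->]].
  - exists (2 * r), k. rewrite (proj1 (ones_below_b_lower r k ltac:(lra))).
    split; [lra|]. split; [lia|]. rewrite mult_INR. apply Rabs_le. simpl. lra.
  - exists (2 * r), k. rewrite (proj2 (ones_below_b_lower r k ltac:(lra))).
    split; [lra|]. split; [lia|]. rewrite plus_INR, mult_INR. apply Rabs_le. simpl. lra.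
  - exists (2 * r - 1), k. rewrite (proj1 (ones_below_b_upper r k ltac:(lra))).
    split; [lra|]. split; [lia|]. rewrite plus_INR, mult_INR. apply Rabs_le. simpl. lra.
  - exists (2 * r - 1), (S k). rewrite (proj2 (ones_below_b_upper r k ltac:(lra))).
    split; [lra|]. split; [lia|]. rewrite !plus_INR, mult_INR, (S_INR k). apply Rabs_le. simpl. lra.
Qed.

(* The square-root bound is preserved by one halving step: if 2m <= n+1 and
   n >= 2, then 4 sqrt m + 1/2 <= 4 sqrt n. *)
Lemma sqrt_bound_halving (x d : R) (m n : nat) :
  Rabs x <= 4 * sqrt (INR m) -> Rabs d <= 1/2 -> (2 * m <= n + 1)%nat -> (2 <= n)%nat ->
  Rabs (x + d) <= 4 * sqrt (INR n).
Proof.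
  intros Hx Hd Hmn Hn.
  apply le_INR in Hmn, Hn. rewrite mult_INR, plus_INR in Hmn. simpl in Hmn, Hn.
  pose proof (sqrt_pos (INR m)). pose proof (sqrt_pos (INR n)).
  pose proof (sqrt_sqrt (INR m) (pos_INR m)). pose proof (sqrt_sqrt (INR n) (pos_INR n)).
  set (t := sqrt (INR m)) in *. set (s := sqrt (INR n)) in *.
  assert (Hs : s >= 1) by nra.
  assert (4 * t + 1/2 <= 4 * s) by nra.
  pose proof (Rabs_triang x d). lra.
Qed.

Lemma discrepancy_sqrt_bound (r : R) (n : nat) : 0 <= r <= 1 ->
  Rabs (discrepancy r n) <= 4 * sqrt (INR n).
Proof.
  revert r. induction n as [n IH] using (well_founded_induction lt_wf). intros r Hr.
  destruct (Nat.lt_ge_cases n 2) as [Hsmall | Hn].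
  - pose proof (discrepancy_le_length r n Hr).
    destruct n as [|[|]]; [| |lia]; simpl INR in *; rewrite ?sqrt_0, ?sqrt_1; lra.
  - destruct (discrepancy_halving r n Hr) as (r' & m & Hr' & Hmn & Hstep).
    replace (discrepancy r n) with (discrepancy r' m + (discrepancy r n - discrepancy r' m))
      by ring.
    apply (sqrt_bound_halving _ _ m); [apply IH; [lia | exact Hr'] | exact Hstep | exact Hmn | exact Hn].
Qed.

Lemma is_lim_seq_of_sqrt_deviation (x : nat -> R) (l C : R) :
  (forall n, Rabs (x n - l * INR n) <= C * sqrt (INR n)) ->
  is_lim_seq (fun n => x n / INR n) l.
Proof.
  intros Hx. apply is_lim_seq_spec. intros eps.
  pose proof (cond_pos eps) as Heps.
  destruct (INR_unbounded ((C / eps) ^ 2)) as [N HN].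
  exists (S N). intros n Hn.
  assert (HNn : INR N < INR n) by (apply lt_INR; lia).
  pose proof (pow2_ge_0 (C / eps)).
  assert (Hpos : 0 < INR n) by lra.
  pose proof (sqrt_pos (INR n)). pose proof (sqrt_sqrt (INR n) (pos_INR n)).
  set (s := sqrt (INR n)) in *.
  assert (HCs : C / eps < s) by (simpl in HN; nra).
  apply Rlt_div_l in HCs; [|exact Heps].
  replace (x n / INR n - l) with ((x n - l * INR n) / INR n) by (field; lra).
  rewrite Rabs_div, (Rabs_pos_eq (INR n)) by lra.
  apply Rlt_div_l; [exact Hpos|].
  assert (Hs : 0 < s) by (apply sqrt_lt_R0; exact Hpos).
  specialize (Hx n). fold s in Hx.
  pose proof (Rmult_lt_compat_r s _ _ Hs HCs). nra.
Qed.

Theorem lemma2p6 : forall r : R, 0 <= r <= 1 ->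
  is_lim_seq (fun n : nat => INR (ones_below (b r) n) / INR n) r.
Proof.
  intros r Hr. apply (is_lim_seq_of_sqrt_deviation _ r 4).
  intros n. exact (discrepancy_sqrt_bound r n Hr).
Qed.
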